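(* For any $n,N\in\mathbb{N}$ and $a\in\mathbb{T}$, with $H_N=\sum_{k=1}^N1/k$, $$\frac{1}{2N+1}\sum_{w\in\mathbb{T}_N}\Big|\mathsf{Dir}_n\Big(\frac wa\Big)\Big|\le\frac{4n+2}{2N+1}+H_N,$$ $$\frac{1}{2N+1}\sum_{w\in\mathbb{T}_N}\Big|\mathsf{Fej}^+_{2n}\Big(\frac wa\Big)\Big|=\frac{1}{2N+1}\sum_{w\in\mathbb{T}_N}\Big|\mathsf{Fej}_n\Big(\frac wa\Big)\Big|\le\frac{2n+2}{2N+1}+\Big(\frac{2N+1}{2n+2}\Big)\frac{\pi^2}{6}.$$
   Context: $\mathbb{T}$ is the unit circle; $\mathbb{T}_N=\{\exp(i2\pi k/(2N+1)):k=-N,\dots,N\}$. Dirichlet kernel $\mathsf{Dir}_n(z)=\sum_{|k|\le n}z^k$; Fejér kernel $\mathsf{Fej}_n(z)=\sum_{|k|\le n}\big(1-\frac{|k|}{n+1}\big)z^k$; causal Fejér kernel $\mathsf{Fej}^+_{2n}(z)=z^n\mathsf{Fej}_n(z)$. *)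

From Stdlib Require Import Reals ZArith List.
From Coquelicot Require Import Coquelicot.
Import ListNotations.
Open Scope R_scope.

Definition Cpowz (z : C) (k : Z) : C :=
  if (0 <=? k)%Z then Cpow z (Z.to_nat k) else Cpow (Cinv z) (Z.to_nat (- k)).

Definition Csum {A : Type} (f : A -> C) (l : list A) : C :=
  fold_right Cplus (RtoC 0) (map f l).

Definition Zrange (n : nat) : list Z :=
  map (fun j => (Z.of_nat j - Z.of_nat n)%Z) (seq 0 (2 * n + 1)).

Definition Dir (n : nat) (z : C) : C := Csum (fun k => Cpowz z k) (Zrange n).

Definition Fej (n : nat) (z : C) : C :=
  Csum (fun k => Cmult (RtoC (1 - IZR (Z.abs k) / (INR n + 1))) (Cpowz z k))
       (Zrange n).

Definition FejPlus2 (n : nat) (z : C) : C := Cmult (Cpow z n) (Fej n z).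

Definition rootpt (N : nat) (k : Z) : C :=
  (cos (2 * PI * IZR k / (2 * INR N + 1)), sin (2 * PI * IZR k / (2 * INR N + 1))).
Definition TN (N : nat) : list C := map (rootpt N) (Zrange N).

Definition Rsuml {A : Type} (f : A -> R) (l : list A) : R :=
  fold_right Rplus 0 (map f l).

Definition harmonic (N : nat) : R := Rsuml (fun k => / INR k) (seq 1 N).

Definition avgTN (N : nat) (K : C -> C) (a : C) : R :=
  / (2 * INR N + 1) * Rsuml (fun w => Cmod (K (Cdiv w a))) (TN N).

From Stdlib Require Import Reals Lra Lia ZArith List.
From Coquelicot Require Import Coquelicot.
Import ListNotations.
Open Scope R_scope.

(* Write a = cis phi.  The average over T_N is then (1/(2N+1)) times the sum of |K| at the
   2N+1 points k d - phi, d = 2 pi/(2N+1), and since |K| is even and 2 pi-periodic the phase may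
   be moved into [0, d/2].  Listed by distance from 0 modulo 2 pi, the j-th of these points t
   satisfies |sin (t/2)| >= j/(2N+1) by Jordan's inequality.  The closed forms
   Dir_n(t) sin(t/2) = sin((2n+1)t/2) and (n+1) Fej_n(t) 2 sin(t/2)^2 = 1 - cos((n+1)t)
   bound |Dir_n(t)| by 1/|sin(t/2)| and |Fej_n(t)| by 1/((n+1) sin(t/2)^2); the two points
   nearest to 0 are bounded by the sup norms 2n+1 and n+1 instead.  Summing over j >= 2,
   sum (2N+1)/j <= (2N+1) H_N and sum 1/j^2 <= 2/3, and 2/3 (2N+1)/(n+1) is at most
   (2N+1)/(2n+2) pi^2/6 because pi^2 > 8.  The causal Fejer kernel differs from Fej_n by the
   unimodular factor z^n. *)

(** * Finite sums over lists and over [Zrange] *)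

Lemma Rsuml_nil {A} (f : A -> R) : Rsuml f [] = 0.
Proof. reflexivity. Qed.

Lemma Rsuml_cons {A} (f : A -> R) x l : Rsuml f (x :: l) = f x + Rsuml f l.
Proof. reflexivity. Qed.

Lemma Rsuml_app {A} (f : A -> R) l1 l2 :
  Rsuml f (l1 ++ l2) = Rsuml f l1 + Rsuml f l2.
Proof.
  induction l1 as [|x l1 IH]; cbn [app]; [rewrite Rsuml_nil; ring|].
  rewrite !Rsuml_cons, IH; ring.
Qed.

Lemma Rsuml_map {A B} (f : B -> R) (g : A -> B) l :
  Rsuml f (map g l) = Rsuml (fun x => f (g x)) l.
Proof. unfold Rsuml. now rewrite map_map. Qed.

Lemma Rsuml_ext {A} (f g : A -> R) l :
  (forall x, In x l -> f x = g x) -> Rsuml f l = Rsuml g l.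
Proof.
  induction l as [|x l IH]; intros H; [reflexivity|].
  rewrite !Rsuml_cons, H, IH; auto with datatypes.
Qed.

Lemma Rsuml_le {A} (f g : A -> R) l :
  (forall x, In x l -> f x <= g x) -> Rsuml f l <= Rsuml g l.
Proof.
  induction l as [|x l IH]; intros H; [apply Rle_refl|].
  rewrite !Rsuml_cons. apply Rplus_le_compat; auto with datatypes.
Qed.

Lemma Rsuml_scal {A} (c : R) (f : A -> R) l :
  Rsuml (fun x => c * f x) l = c * Rsuml f l.
Proof. induction l as [|x l IH]; [rewrite !Rsuml_nil; ring|]. rewrite !Rsuml_cons, IH; ring. Qed.

Lemma Rsuml_plus {A} (f g : A -> R) l :
  Rsuml (fun x => f x + g x) l = Rsuml f l + Rsuml g l.
Proof. induction l as [|x l IH]; [rewrite !Rsuml_nil; ring|]. rewrite !Rsuml_cons, IH; ring. Qed.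

Lemma Rsuml_telescope (u : nat -> R) a n :
  Rsuml (fun m => u m - u (S m)) (seq a n) = u a - u (a + n)%nat.
Proof.
  revert a; induction n as [|n IH]; intros a.
  - cbn [seq]. rewrite Rsuml_nil, Nat.add_0_r; ring.
  - cbn [seq]. rewrite Rsuml_cons, IH, Nat.add_succ_r. cbn. ring.
Qed.

Lemma Rsuml_seq_rotate (g : nat -> R) L :
  g (S L) = g 0%nat -> Rsuml (fun i => g (S i)) (seq 0 (S L)) = Rsuml g (seq 0 (S L)).
Proof.
  intros Hg. rewrite <- Rsuml_map, seq_shift, seq_S, Rsuml_app.
  cbn [seq Nat.add]. rewrite !Rsuml_cons, Rsuml_nil, Hg; ring.
Qed.

Lemma Zrange_S n :
  Zrange (S n) = (- Z.of_nat (S n))%Z :: Zrange n ++ [Z.of_nat (S n)].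
Proof.
  unfold Zrange. replace (2 * S n + 1)%nat with (S (S (2 * n + 1))) by lia.
  rewrite seq_S. cbn [seq app map]. rewrite map_app, <- seq_shift, map_map. cbn [map].
  f_equal. f_equal; [apply map_ext; intros; lia | f_equal; lia].
Qed.

Lemma In_Zrange k n : In k (Zrange n) -> (- Z.of_nat n <= k <= Z.of_nat n)%Z.
Proof. unfold Zrange. intros [j [<- Hj%in_seq]]%in_map_iff. lia. Qed.

Lemma Rsuml_Zrange_S (f : Z -> R) n :
  Rsuml f (Zrange (S n)) = Rsuml f (Zrange n) + f (Z.of_nat (S n)) + f (- Z.of_nat (S n))%Z.
Proof. rewrite Zrange_S, Rsuml_cons, Rsuml_app, Rsuml_cons, Rsuml_nil. ring. Qed.

Lemma Rsuml_Zrange_opp (f : Z -> R) n :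
  Rsuml f (Zrange n) = Rsuml (fun k => f (- k)%Z) (Zrange n).
Proof.
  induction n as [|n IH]; [reflexivity|].
  rewrite !Rsuml_Zrange_S, IH, Z.opp_involutive; ring.
Qed.

Lemma Rsuml_Zrange_shift1 (g : Z -> R) n :
  (forall k, g (k + Z.of_nat (2 * n + 1))%Z = g k) ->
  Rsuml (fun k => g (k + 1)%Z) (Zrange n) = Rsuml g (Zrange n).
Proof.
  intros Hg. unfold Zrange. rewrite !Rsuml_map.
  replace (2 * n + 1)%nat with (S (2 * n)) by lia.
  rewrite <- (Rsuml_seq_rotate (fun i => g (Z.of_nat i - Z.of_nat n)%Z)).
  - apply Rsuml_ext; intros i _. f_equal; lia.
  - rewrite <- (Hg (Z.of_nat 0 - Z.of_nat n)%Z). f_equal; lia.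
Qed.

Lemma Rsuml_Zrange_shift (f : Z -> R) n :
  (forall k, f (k + Z.of_nat (2 * n + 1))%Z = f k) ->
  forall j, Rsuml (fun k => f (k + j)%Z) (Zrange n) = Rsuml f (Zrange n).
Proof.
  intros Hf j. induction j as [|j IH|j IH] using Z.peano_ind.
  - apply Rsuml_ext; intros k _. now rewrite Z.add_0_r.
  - rewrite <- IH, <- (Rsuml_Zrange_shift1 (fun k => f (k + j)%Z)).
    + apply Rsuml_ext; intros k _. f_equal; lia.
    + intros k. rewrite <- (Hf (k + j)%Z). f_equal; lia.
  - rewrite <- IH, <- (Rsuml_Zrange_shift1 (fun k => f (k + Z.pred j)%Z)).
    + apply Rsuml_ext; intros k _. f_equal; lia.
    + intros k. rewrite <- (Hf (k + Z.pred j)%Z). f_equal; lia.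
Qed.

(* [zigzag] maps 0, 1, -1, 2, -2, ... to 0, 1, 2, 3, 4, ...: the samples [k d - p] with
   [0 <= p <= d/2] listed by increasing distance from 0. *)
Definition zigzag (k : Z) : nat :=
  Z.to_nat (if (0 <? k)%Z then 2 * k - 1 else - 2 * k).

Lemma Rsuml_Zrange_zigzag (F : nat -> R) n :
  Rsuml (fun k => F (zigzag k)) (Zrange n) + F (2 * n + 1)%nat
  = F 0%nat + F 1%nat + Rsuml (fun m => F (2 * m)%nat + F (2 * m + 1)%nat) (seq 1 n).
Proof.
  induction n as [|n IH]; [cbn; ring|].
  rewrite Rsuml_Zrange_S, seq_S, Rsuml_app, Rsuml_cons, Rsuml_nil.
  replace (zigzag (Z.of_nat (S n))) with (2 * n + 1)%nat
    by (unfold zigzag; destruct (Z.ltb_spec 0 (Z.of_nat (S n))); lia).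
  replace (zigzag (- Z.of_nat (S n))) with (2 * (1 + n))%nat
    by (unfold zigzag; destruct (Z.ltb_spec 0 (- Z.of_nat (S n))); lia).
  replace (2 * S n + 1)%nat with (2 * (1 + n) + 1)%nat by lia.
  lra.
Qed.

Definition cis (t : R) : C := (cos t, sin t).

Lemma cis_plus a b : cis (a + b) = Cmult (cis a) (cis b).
Proof. unfold cis, Cmult; cbn. rewrite cos_plus, sin_plus. f_equal; ring. Qed.

Lemma cis_plus_2PI t : cis (t + 2 * PI) = cis t.
Proof. unfold cis. rewrite cos_plus, sin_plus, cos_2PI, sin_2PI. f_equal; ring. Qed.

Lemma Cmod_cis t : Cmod (cis t) = 1.
Proof.
  unfold Cmod, cis; cbn. pose proof (sin2_cos2 t) as H. unfold Rsqr in H.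
  replace (cos t * (cos t * 1) + sin t * (sin t * 1)) with 1 by lra. apply sqrt_1.
Qed.

Lemma Cpow_cis t m : Cpow (cis t) m = cis (INR m * t).
Proof.
  induction m as [|m IH].
  - unfold cis; cbn. now rewrite Rmult_0_l, cos_0, sin_0.
  - change (Cpow (cis t) (S m)) with (Cmult (cis t) (Cpow (cis t) m)).
    rewrite IH, <- cis_plus, S_INR. f_equal; ring.
Qed.

Lemma Cinv_cis t : Cinv (cis t) = cis (- t).
Proof.
  unfold Cinv, cis; cbn. rewrite cos_neg, sin_neg.
  pose proof (sin2_cos2 t) as H. unfold Rsqr in H.
  replace (cos t * (cos t * 1) + sin t * (sin t * 1)) with 1 by lra.
  f_equal; field.
Qed.

Lemma Cpowz_cis t k : Cpowz (cis t) k = cis (IZR k * t).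
Proof.
  unfold Cpowz. destruct (Z.leb_spec 0 k).
  - rewrite Cpow_cis, INR_IZR_INZ, Z2Nat.id; auto.
  - rewrite Cinv_cis, Cpow_cis, INR_IZR_INZ, Z2Nat.id, opp_IZR by lia.
    f_equal; ring.
Qed.

Lemma Cdiv_cis a b : Cdiv (cis a) (cis b) = cis (a - b).
Proof. unfold Cdiv. now rewrite Cinv_cis, <- cis_plus. Qed.

Lemma Cmod_eq_1_cis (a : C) : Cmod a = 1 -> exists t, a = cis t.
Proof.
  destruct a as [x y]. unfold Cmod; cbn. intros H.
  assert (Hs : x * (x * 1) + y * (y * 1) = 1).
  { rewrite <- (sqrt_sqrt (x * (x * 1) + y * (y * 1))) by nra. rewrite H. ring. }
  assert (Hx : -1 <= x <= 1) by nra.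
  destruct (Rle_or_lt 0 y).
  - exists (acos x). unfold cis. rewrite cos_acos, sin_acos by auto. f_equal.
    replace (1 - x²) with (y²) by (unfold Rsqr; nra). now rewrite sqrt_Rsqr.
  - exists (- acos x). unfold cis. rewrite cos_neg, sin_neg, cos_acos, sin_acos by auto. f_equal.
    replace (1 - x²) with ((- y)²) by (unfold Rsqr; nra). rewrite sqrt_Rsqr; lra.
Qed.

Lemma Csum_pair {A} (f : A -> C) l :
  Csum f l = (Rsuml (fun x => fst (f x)) l, Rsuml (fun x => snd (f x)) l).
Proof. induction l as [|x l IH]; [reflexivity|]. unfold Csum in *; cbn. now rewrite IH. Qed.

Lemma Csum_Zrange_conj (f : Z -> C) n :
  (forall k, f (- k)%Z = Cconj (f k)) ->
  Csum f (Zrange n) = RtoC (Rsuml (fun k => fst (f k)) (Zrange n)).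
Proof.
  intros Hf. rewrite Csum_pair. unfold RtoC. f_equal.
  assert (Hodd : Rsuml (fun k => snd (f k)) (Zrange n) = - Rsuml (fun k => snd (f k)) (Zrange n)).
  { transitivity (Rsuml (fun k => -1 * snd (f k)) (Zrange n)).
    - rewrite Rsuml_Zrange_opp. apply Rsuml_ext; intros k _. rewrite Hf; cbn. ring.
    - rewrite Rsuml_scal; ring. }
  lra.
Qed.

(** * The Dirichlet and Fejer kernels on the circle *)

Definition dirichlet (n : nat) (t : R) : R :=
  Rsuml (fun k => cos (IZR k * t)) (Zrange n).

Definition fejer (n : nat) (t : R) : R :=
  Rsuml (fun k => (1 - IZR (Z.abs k) / (INR n + 1)) * cos (IZR k * t)) (Zrange n).

Lemma Dir_cis n t : Dir n (cis t) = RtoC (dirichlet n t).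
Proof.
  unfold Dir. rewrite Csum_Zrange_conj.
  - f_equal. apply Rsuml_ext; intros k _. now rewrite Cpowz_cis.
  - intros k. rewrite !Cpowz_cis, opp_IZR, <- Ropp_mult_distr_l.
    unfold cis, Cconj; cbn. now rewrite cos_neg, sin_neg.
Qed.

Lemma Fej_cis n t : Fej n (cis t) = RtoC (fejer n t).
Proof.
  unfold Fej. rewrite Csum_Zrange_conj.
  - f_equal. apply Rsuml_ext; intros k _. rewrite Cpowz_cis. simpl. ring.
  - intros k. rewrite !Cpowz_cis, opp_IZR, <- Ropp_mult_distr_l, Z.abs_opp.
    unfold cis, Cconj, Cmult, RtoC; cbn. rewrite cos_neg, sin_neg. f_equal; ring.
Qed.

Lemma dirichlet_0 t : dirichlet 0 t = 1.
Proof. unfold dirichlet; cbn. rewrite Rmult_0_l, cos_0. ring. Qed.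

Lemma fejer_0 t : fejer 0 t = 1.
Proof. unfold fejer; cbn. rewrite Rmult_0_l, cos_0. field. Qed.

Lemma dirichlet_S n t : dirichlet (S n) t = dirichlet n t + 2 * cos (INR (S n) * t).
Proof.
  unfold dirichlet. rewrite Rsuml_Zrange_S, opp_IZR, <- INR_IZR_INZ,
    <- Ropp_mult_distr_l, cos_neg. ring.
Qed.

Lemma dirichlet_opp n t : dirichlet n (- t) = dirichlet n t.
Proof.
  apply Rsuml_ext; intros k _. now rewrite <- Ropp_mult_distr_r, cos_neg.
Qed.

Lemma dirichlet_mul_sin n t :
  dirichlet n t * sin (t / 2) = sin ((2 * INR n + 1) * (t / 2)).
Proof.
  induction n as [|n IH].
  - rewrite dirichlet_0, Rmult_1_l. f_equal; cbn; ring.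
  - rewrite dirichlet_S, Rmult_plus_distr_r, IH, S_INR.
    set (u := t / 2). replace t with (2 * u) by (unfold u; field).
    replace ((2 * INR n + 1) * u) with ((2 * INR n + 2) * u - u) by ring.
    replace ((2 * (INR n + 1) + 1) * u) with ((2 * INR n + 2) * u + u) by ring.
    replace ((INR n + 1) * (2 * u)) with ((2 * INR n + 2) * u) by ring.
    rewrite sin_plus, sin_minus. ring.
Qed.

Lemma Rabs_dirichlet_le n t : Rabs (dirichlet n t) <= 2 * INR n + 1.
Proof.
  induction n as [|n IH].
  - rewrite dirichlet_0, Rabs_R1. cbn; lra.
  - rewrite dirichlet_S. set (c := cos (INR (S n) * t)).
    assert (Hc : Rabs c <= 1) by apply Rabs_le, COS_bound.
    pose proof (Rabs_triang (dirichlet n t) (2 * c)) as Htri.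
    rewrite Rabs_mult, (Rabs_pos_eq 2) in Htri by lra.
    rewrite S_INR. lra.
Qed.

Lemma Rabs_dirichlet_le_inv n t s :
  0 < s -> s <= Rabs (sin (t / 2)) -> Rabs (dirichlet n t) <= / s.
Proof.
  intros Hs Hsin.
  assert (Hprod : Rabs (dirichlet n t) * Rabs (sin (t / 2)) <= 1).
  { rewrite <- Rabs_mult, dirichlet_mul_sin. apply Rabs_le, SIN_bound. }
  apply (Rmult_le_reg_r s); [lra|]. rewrite Rinv_l by lra.
  pose proof (Rabs_pos (dirichlet n t)). nra.
Qed.

Lemma fejer_S n t :
  (INR n + 2) * fejer (S n) t = (INR n + 1) * fejer n t + dirichlet (S n) t.
Proof.
  pose proof (pos_INR n).
  unfold fejer, dirichlet. rewrite <- !Rsuml_scal, !Rsuml_Zrange_S, S_INR.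
  rewrite (Rsuml_ext _ (fun k => (INR n + 1) * ((1 - IZR (Z.abs k) / (INR n + 1)) * cos (IZR k * t))
                              + cos (IZR k * t)))
    by (intros k _; field; lra).
  rewrite Rsuml_plus, Z.abs_opp, Z.abs_eq, opp_IZR, <- INR_IZR_INZ, S_INR by lia.
  rewrite <- Ropp_mult_distr_l, cos_neg. field. lra.
Qed.

Lemma fejer_opp n t : fejer n (- t) = fejer n t.
Proof.
  apply Rsuml_ext; intros k _. now rewrite <- Ropp_mult_distr_r, cos_neg.
Qed.

Lemma fejer_mul_sin2 n t :
  (INR n + 1) * fejer n t * (2 * sin (t / 2) ^ 2) = 1 - cos ((INR n + 1) * t).
Proof.
  induction n as [|n IH].
  - rewrite fejer_0. replace (INR 0 + 1) with 1 by (cbn; ring).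
    replace (1 * t) with (2 * (t / 2)) by field. rewrite cos_2a_sin. ring.
  - replace ((INR (S n) + 1) * fejer (S n) t) with ((INR n + 2) * fejer (S n) t)
      by (rewrite S_INR; ring).
    rewrite fejer_S, Rmult_plus_distr_r, IH.
    replace (dirichlet (S n) t * (2 * sin (t / 2) ^ 2))
      with (2 * (dirichlet (S n) t * sin (t / 2)) * sin (t / 2)) by ring.
    rewrite dirichlet_mul_sin, S_INR.
    set (u := t / 2). replace t with (2 * u) by (unfold u; field).
    replace ((2 * (INR n + 1) + 1) * u) with ((2 * INR n + 3) * u) by ring.
    replace ((INR n + 1) * (2 * u)) with ((2 * INR n + 3) * u - u) by ring.
    replace ((INR n + 1 + 1) * (2 * u)) with ((2 * INR n + 3) * u + u) by ring.
    rewrite cos_plus, cos_minus. ring.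
Qed.

Lemma Rabs_fejer_le n t : Rabs (fejer n t) <= INR n + 1.
Proof.
  assert (Hsq : (INR n + 1) * Rabs (fejer n t) <= (INR n + 1) ^ 2).
  { induction n as [|n IH].
    - rewrite fejer_0, Rabs_R1. cbn; lra.
    - pose proof (pos_INR n).
      pose proof (Rabs_dirichlet_le (S n) t) as HD. rewrite S_INR in HD.
      assert (HF : (INR n + 2) * Rabs (fejer (S n) t)
                   <= (INR n + 1) * Rabs (fejer n t) + Rabs (dirichlet (S n) t)).
      { rewrite <- (Rabs_pos_eq (INR n + 2)), <- (Rabs_pos_eq (INR n + 1)), <- !Rabs_mult
          by lra.
        rewrite fejer_S. apply Rabs_triang. }
      rewrite S_INR. nra. }
  pose proof (pos_INR n). nra.
Qed.

Lemma Rabs_fejer_le_inv n t s :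
  0 < s -> s <= Rabs (sin (t / 2)) -> Rabs (fejer n t) <= / ((INR n + 1) * s ^ 2).
Proof.
  intros Hs Hsin. pose proof (pos_INR n).
  assert (Hprod : (INR n + 1) * Rabs (fejer n t) * (2 * Rabs (sin (t / 2)) ^ 2) <= 2).
  { replace ((INR n + 1) * Rabs (fejer n t) * (2 * Rabs (sin (t / 2)) ^ 2))
      with (Rabs ((INR n + 1) * fejer n t * (2 * sin (t / 2) ^ 2)))
      by (rewrite !Rabs_mult, RPow_abs, (Rabs_pos_eq 2), (Rabs_pos_eq (INR n + 1)) by lra; ring).
    rewrite fejer_mul_sin2. pose proof (COS_bound ((INR n + 1) * t)). apply Rabs_le; lra. }
  assert (Hs2 : s ^ 2 <= Rabs (sin (t / 2)) ^ 2) by (apply pow_incr; lra).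
  apply (Rmult_le_reg_r ((INR n + 1) * s ^ 2)); [apply Rmult_lt_0_compat; [lra|nra]|].
  rewrite Rinv_l by nra.
  assert (HF : 0 <= (INR n + 1) * Rabs (fejer n t)) by (apply Rmult_le_pos; [lra|apply Rabs_pos]).
  pose proof (Rmult_le_compat_l _ _ _ HF Hs2). lra.
Qed.

(** * Jordan's inequality and the sampling points *)

Lemma sin_lb_eq a : sin_lb a = a - a ^ 3 / 6 + a ^ 5 / 120 - a ^ 7 / 5040.
Proof. unfold sin_lb, sin_approx, sin_term. cbn. field. Qed.

Lemma cos_lb_eq a : cos_lb a = 1 - a ^ 2 / 2 + a ^ 4 / 24 - a ^ 6 / 720.
Proof. unfold cos_lb, cos_approx, cos_term. cbn. field. Qed.

Lemma jordan_sin y : 0 <= y <= PI / 2 -> 2 * y <= PI * sin y.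
Proof.
  intros Hy. pose proof PI2_3_2. pose proof PI_4.
  (* Taylor bounds: sin y >= y - y^3/6 if y <= 1, else sin y = cos u >= 1 - u^2/2, u = PI/2 - y *)
  destruct (Rle_or_lt y 1) as [Hy1|Hy1].
  - destruct (SIN y) as [Hs _]; [lra|lra|]. rewrite sin_lb_eq in Hs.
    assert (Hy2 : y ^ 2 <= 1) by nra.
    pose proof (pow_le y 5 (proj1 Hy)).
    assert (y ^ 7 <= y ^ 5) by (replace (y ^ 7) with (y ^ 5 * y ^ 2) by ring; nra).
    assert (y ^ 3 <= y) by (replace (y ^ 3) with (y * y ^ 2) by ring; nra).
    assert (5 / 6 * y <= sin y) by lra.
    assert (PI * (5 / 6 * y) <= PI * sin y) by (apply Rmult_le_compat_l; lra).
    nra.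
  - set (u := PI / 2 - y).
    assert (Hsy : sin y = cos u) by (unfold u; now rewrite cos_shift).
    assert (Hu : 0 <= u < 1) by (unfold u; lra).
    destruct (COS u) as [Hc _]; [lra|lra|]. rewrite cos_lb_eq in Hc.
    assert (Hu2 : u ^ 2 <= 1) by nra.
    pose proof (pow_le u 4 (proj1 Hu)).
    assert (u ^ 6 <= u ^ 4) by (replace (u ^ 6) with (u ^ 4 * u ^ 2) by ring; nra).
    assert (1 - u ^ 2 / 2 <= sin y) by lra.
    assert (PI * (1 - u ^ 2 / 2) <= PI * sin y) by (apply Rmult_le_compat_l; lra).
    assert (u * (PI * u) <= u * 4) by (apply Rmult_le_compat_l; nra).
    replace (2 * y) with (PI - 2 * u) by (unfold u; field). lra.
Qed.

Lemma sin_half_ge c x : 0 <= c <= x -> x <= 2 * PI - c -> c / PI <= sin (x / 2).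
Proof.
  intros Hcx Hx. pose proof PI_RGT_0.
  apply (Rmult_le_reg_l PI); [lra|]. replace (PI * (c / PI)) with c by (field; lra).
  destruct (Rle_or_lt x PI).
  - pose proof (jordan_sin (x / 2)). lra.
  - rewrite <- sin_PI_x. pose proof (jordan_sin (PI - x / 2)). lra.
Qed.

Definition mesh (N : nat) : R := 2 * PI / (2 * INR N + 1).

Lemma INR_odd N : INR (2 * N + 1) = 2 * INR N + 1.
Proof. rewrite plus_INR, mult_INR. reflexivity. Qed.

Lemma odd_INR_pos N : 0 < 2 * INR N + 1.
Proof. pose proof (pos_INR N). lra. Qed.

Lemma mesh_pos N : 0 < mesh N.
Proof. apply Rdiv_lt_0_compat; [pose proof PI_RGT_0|apply odd_INR_pos]; lra. Qed.

Lemma mesh_mul N : mesh N * (2 * INR N + 1) = 2 * PI.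
Proof. unfold mesh. pose proof (odd_INR_pos N). field. lra. Qed.

Lemma sin_sample_ge N k p :
  (- Z.of_nat N <= k <= Z.of_nat N)%Z -> 0 <= p <= mesh N / 2 ->
  INR (zigzag k) / (2 * INR N + 1) <= Rabs (sin ((IZR k * mesh N - p) / 2)).
Proof.
  intros Hk Hp. pose proof (mesh_pos N). pose proof (mesh_mul N). pose proof PI_RGT_0.
  pose proof (odd_INR_pos N). set (d := mesh N) in *.
  assert (HkN : IZR k * d <= INR N * d /\ - INR N * d <= IZR k * d).
  { rewrite INR_IZR_INZ, <- opp_IZR.
    split; apply Rmult_le_compat_r; try lra; apply IZR_le; lia. }
  assert (Hc : forall j, INR j / (2 * INR N + 1) = INR j * d / 2 / PI).
  { intros j. unfold d, mesh. field. lra. }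
  rewrite Hc. unfold zigzag. destruct (Z.ltb_spec 0 k).
  - rewrite INR_IZR_INZ, Z2Nat.id, minus_IZR, mult_IZR by lia.
    assert (d <= IZR k * d) by (rewrite <- (Rmult_1_l d) at 1;
                                apply Rmult_le_compat_r; [lra|apply IZR_le; lia]).
    eapply Rle_trans; [|apply Rle_abs]. apply sin_half_ge; lra.
  - rewrite INR_IZR_INZ, Z2Nat.id, mult_IZR by lia.
    assert (IZR k * d <= 0) by (apply Rmult_le_0_r; [apply IZR_le; lia|lra]).
    rewrite <- Rabs_Ropp, <- sin_neg. eapply Rle_trans; [|apply Rle_abs].
    replace (- ((IZR k * d - p) / 2)) with ((- IZR k * d + p) / 2) by field.
    apply sin_half_ge; lra.
Qed.

Lemma sample_phase_reduce (h : R -> R) N phi :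
  (forall t, h (t + 2 * PI) = h t) -> (forall t, h (- t) = h t) ->
  exists p, 0 <= p <= mesh N / 2 /\
    Rsuml (fun k => h (IZR k * mesh N - phi)) (Zrange N)
    = Rsuml (fun k => h (IZR k * mesh N - p)) (Zrange N).
Proof.
  intros Hper Hev. pose proof (mesh_pos N). pose proof (mesh_mul N).
  set (d := mesh N) in *.
  (* shift by the nearest integer [j] to [phi / d] *)
  set (j := up (phi / d - 1 / 2)).
  destruct (archimed (phi / d - 1 / 2)) as [Hj1 Hj2]. fold j in Hj1, Hj2.
  set (p := phi - IZR j * d).
  assert (Hp : - (d / 2) <= p <= d / 2).
  { replace p with ((phi / d - IZR j) * d) by (unfold p; field; lra).
    assert (0 <= (phi / d - IZR j + 1 / 2) * d) by (apply Rmult_le_pos; lra).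
    assert (0 <= (IZR j - phi / d + 1 / 2) * d) by (apply Rmult_le_pos; lra).
    lra. }
  assert (Hshift : Rsuml (fun k => h (IZR k * d - phi)) (Zrange N)
                   = Rsuml (fun k => h (IZR k * d - p)) (Zrange N)).
  { rewrite <- (Rsuml_Zrange_shift (fun k => h (IZR k * d - phi)) N) with (j := j).
    - apply Rsuml_ext; intros k _. f_equal. rewrite plus_IZR. unfold p; ring.
    - intros k. rewrite <- (Hper (IZR k * d - phi)), plus_IZR, <- INR_IZR_INZ, INR_odd.
      f_equal. rewrite Rmult_plus_distr_r, (Rmult_comm _ d). lra. }
  destruct (Rle_or_lt 0 p).
  - exists p. split; [lra|exact Hshift].
  - exists (- p). split; [lra|]. rewrite Hshift, Rsuml_Zrange_opp.
    apply Rsuml_ext; intros k _. rewrite <- (Hev (IZR k * d - - p)), opp_IZR.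
    f_equal; ring.
Qed.

Lemma sampled_sum_le (h w : R -> R) A N phi :
  (forall t, h (t + 2 * PI) = h t) -> (forall t, h (- t) = h t) ->
  (forall t, 0 <= h t <= A) ->
  (forall t s, 0 < s -> s <= Rabs (sin (t / 2)) -> h t <= w s) ->
  Rsuml (fun k => h (IZR k * mesh N - phi)) (Zrange N)
  <= 2 * A + Rsuml (fun m => w (2 * INR m / (2 * INR N + 1))
                            + w ((2 * INR m + 1) / (2 * INR N + 1))) (seq 1 N).
Proof.
  intros Hper Hev HA Hw. pose proof (odd_INR_pos N).
  destruct (sample_phase_reduce h N phi Hper Hev) as [p [Hp ->]].
  set (G := fun j => if (j <? 2)%nat then A else w (INR j / (2 * INR N + 1))).
  assert (Hpt : forall k, In k (Zrange N) -> h (IZR k * mesh N - p) <= G (zigzag k)).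
  { intros k Hk%In_Zrange. unfold G. destruct (Nat.ltb_spec (zigzag k) 2).
    - apply HA.
    - apply Hw; [|now apply sin_sample_ge].
      apply Rdiv_lt_0_compat; [apply lt_0_INR; lia|lra]. }
  (* the zigzag identity adds the phantom index 2N+1, whose bound [w 1] dominates [h PI] *)
  assert (Hlast : 0 <= G (2 * N + 1)%nat).
  { unfold G. destruct (Nat.ltb_spec (2 * N + 1) 2); [pose proof (HA 0); lra|].
    rewrite INR_odd, Rdiv_diag by lra.
    apply (Rle_trans _ (h PI)); [apply HA|]. apply Hw; [lra|].
    rewrite sin_PI2, Rabs_R1. lra. }
  assert (Hpairs : Rsuml (fun m => G (2 * m)%nat + G (2 * m + 1)%nat) (seq 1 N)
                   = Rsuml (fun m => w (2 * INR m / (2 * INR N + 1))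
                                     + w ((2 * INR m + 1) / (2 * INR N + 1))) (seq 1 N)).
  { apply Rsuml_ext; intros m Hm%in_seq. unfold G.
    destruct (Nat.ltb_spec (2 * m) 2), (Nat.ltb_spec (2 * m + 1) 2); try lia.
    now rewrite plus_INR, mult_INR. }
  pose proof (Rsuml_Zrange_zigzag G N) as Hz. cbn [G Nat.ltb Nat.leb] in Hz.
  pose proof (Rsuml_le _ _ _ Hpt). lra.
Qed.

Lemma harmonic_pairs_le N :
  Rsuml (fun m => / (2 * INR m) + / (2 * INR m + 1)) (seq 1 N) <= harmonic N.
Proof.
  apply Rsuml_le; intros m Hm%in_seq.
  assert (1 <= INR m) by (apply (le_INR 1); lia).
  assert (/ (2 * INR m + 1) <= / (2 * INR m)) by (apply Rinv_le_contravar; lra).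
  replace (/ INR m) with (2 * / (2 * INR m)) by (field; lra). lra.
Qed.

Lemma inv_sq_le_telescope x : 1 <= x -> / x ^ 2 <= / (x - 1 / 2) - / (x + 1 / 2).
Proof.
  intros Hx. replace (/ (x - 1 / 2) - / (x + 1 / 2)) with (/ (x ^ 2 - 1 / 4))
    by (field; repeat split; nra).
  apply Rinv_le_contravar; nra.
Qed.

Lemma inv_sq_pairs_le N :
  Rsuml (fun m => / (2 * INR m) ^ 2 + / (2 * INR m + 1) ^ 2) (seq 1 N) <= 2 / 3.
Proof.
  set (v := fun m => / (2 * INR m - 1 / 2)).
  apply (Rle_trans _ (Rsuml (fun m => v m - v (S m)) (seq 1 N))).
  - apply Rsuml_le; intros m Hm%in_seq.
    assert (1 <= INR m) by (apply (le_INR 1); lia).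
    pose proof (inv_sq_le_telescope (2 * INR m) ltac:(lra)) as Heven.
    pose proof (inv_sq_le_telescope (2 * INR m + 1) ltac:(lra)) as Hodd.
    unfold v. rewrite S_INR.
    replace (2 * INR m + 1 - 1 / 2) with (2 * INR m + 1 / 2) in Hodd by lra.
    replace (2 * (INR m + 1) - 1 / 2) with (2 * INR m + 1 + 1 / 2) by lra.
    lra.
  - rewrite Rsuml_telescope. unfold v. change (INR 1) with 1.
    replace (/ (2 * 1 - 1 / 2)) with (2 / 3) by field.
    assert (0 < / (2 * INR (1 + N) - 1 / 2)).
    { apply Rinv_0_lt_compat. rewrite S_INR. pose proof (pos_INR N). lra. }
    lra.
Qed.

Lemma avgTN_cis N (K : C -> C) phi :
  avgTN N K (cis phi)
  = / (2 * INR N + 1) * Rsuml (fun k => Cmod (K (cis (IZR k * mesh N - phi)))) (Zrange N).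
Proof.
  unfold avgTN, TN. rewrite Rsuml_map. f_equal. apply Rsuml_ext; intros k _.
  replace (rootpt N k) with (cis (IZR k * mesh N)).
  - now rewrite Cdiv_cis.
  - pose proof (odd_INR_pos N). unfold rootpt, cis, mesh. f_equal; f_equal; field; lra.
Qed.

Lemma Rinv_mul_le_div_add (M S B C : R) : 0 < M -> S <= B + M * C -> / M * S <= B / M + C.
Proof.
  intros HM HS. apply (Rmult_le_reg_l M); [exact HM|].
  rewrite <- Rmult_assoc, Rinv_r, Rmult_1_l by lra.
  replace (M * (B / M + C)) with (B + M * C) by (field; lra). exact HS.
Qed.

Lemma avgTN_Dir_le n N phi :
  avgTN N (Dir n) (cis phi) <= (4 * INR n + 2) / (2 * INR N + 1) + harmonic N.
Proof.
  pose proof (odd_INR_pos N) as HM. rewrite avgTN_cis.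
  apply Rinv_mul_le_div_add; [exact HM|].
  rewrite (Rsuml_ext _ (fun k => Rabs (dirichlet n (IZR k * mesh N - phi))))
    by (intros k _; now rewrite Dir_cis, Cmod_R).
  eapply Rle_trans.
  { apply (sampled_sum_le (fun t => Rabs (dirichlet n t)) (fun s => / s) (2 * INR n + 1)).
    - intros t. now rewrite <- !Cmod_R, <- !Dir_cis, cis_plus_2PI.
    - intros t. now rewrite dirichlet_opp.
    - intros t. split; [apply Rabs_pos|apply Rabs_dirichlet_le].
    - apply Rabs_dirichlet_le_inv. }
  rewrite (Rsuml_ext _ (fun m => (2 * INR N + 1) * (/ (2 * INR m) + / (2 * INR m + 1)))).
  - rewrite Rsuml_scal. pose proof (harmonic_pairs_le N).
    assert (0 <= 2 * INR N + 1) by lra. nra.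
  - intros m Hm%in_seq. assert (1 <= INR m) by (apply (le_INR 1); lia).
    field; lra.
Qed.

Lemma avgTN_FejPlus2 n N phi : avgTN N (FejPlus2 n) (cis phi) = avgTN N (Fej n) (cis phi).
Proof.
  rewrite !avgTN_cis. f_equal. apply Rsuml_ext; intros k _.
  unfold FejPlus2. rewrite Cmod_mult, Cmod_pow, Cmod_cis, pow1. ring.
Qed.

Lemma avgTN_Fej_le n N phi :
  avgTN N (Fej n) (cis phi) <=
    (2 * INR n + 2) / (2 * INR N + 1)
    + ((2 * INR N + 1) / (2 * INR n + 2)) * (PI ^ 2 / 6).
Proof.
  pose proof (odd_INR_pos N) as HM. pose proof (pos_INR n). rewrite avgTN_cis.
  set (M := 2 * INR N + 1) in *.
  (* the sampling argument yields the constant 4/3 in place of pi^2/6 *)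
  apply (Rle_trans _ ((2 * INR n + 2) / M + (M / (2 * INR n + 2)) * (4 / 3))).
  2:{ pose proof PI2_3_2. apply Rplus_le_compat_l, Rmult_le_compat_l.
      - apply Rlt_le, Rdiv_lt_0_compat; lra.
      - nra. }
  apply Rinv_mul_le_div_add; [exact HM|].
  rewrite (Rsuml_ext _ (fun k => Rabs (fejer n (IZR k * mesh N - phi))))
    by (intros k _; now rewrite Fej_cis, Cmod_R).
  eapply Rle_trans.
  { apply (sampled_sum_le (fun t => Rabs (fejer n t)) (fun s => / ((INR n + 1) * s ^ 2))
                           (INR n + 1)).
    - intros t. now rewrite <- !Cmod_R, <- !Fej_cis, cis_plus_2PI.
    - intros t. now rewrite fejer_opp.
    - intros t. split; [apply Rabs_pos|apply Rabs_fejer_le].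
    - apply Rabs_fejer_le_inv. }
  fold M.
  rewrite (Rsuml_ext _ (fun m => M ^ 2 / (INR n + 1) * (/ (2 * INR m) ^ 2 + / (2 * INR m + 1) ^ 2))).
  - rewrite Rsuml_scal. pose proof (inv_sq_pairs_le N).
    assert (0 <= M ^ 2 / (INR n + 1)) by (apply Rlt_le, Rdiv_lt_0_compat; nra).
    replace (M * (M / (2 * INR n + 2) * (4 / 3))) with (M ^ 2 / (INR n + 1) * (2 / 3))
      by (field; lra).
    nra.
  - intros m Hm%in_seq. assert (1 <= INR m) by (apply (le_INR 1); lia).
    field; repeat split; lra.
Qed.

Theorem lemma5 (n N : nat) (a : C) (ha : Cmod a = 1) :
  avgTN N (Dir n) a <= (4 * INR n + 2) / (2 * INR N + 1) + harmonic N /\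
  avgTN N (FejPlus2 n) a = avgTN N (Fej n) a /\
  avgTN N (Fej n) a <=
    (2 * INR n + 2) / (2 * INR N + 1)
    + ((2 * INR N + 1) / (2 * INR n + 2)) * (PI ^ 2 / 6).
Proof.
  destruct (Cmod_eq_1_cis a ha) as [phi ->].
  split; [|split].
  - apply avgTN_Dir_le.
  - apply avgTN_FejPlus2.
  - apply avgTN_Fej_le.
Qed.
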